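(* For $d\ge 4$ and $\ell\ge 3$, the subKautz digraph $sK(d,\ell)$ has diameter $2\ell-1$.
   Context: The subKautz digraph $sK(d,\ell)$ ($d,\ell\ge2$) has vertex set $\{x_1\ldots x_\ell\in\mathbb Z_{d+1}^\ell : x_i\neq x_{i+1},\ i=1,\ldots,\ell-1\}$ and arcs $x_1\ldots x_\ell\to x_2\ldots x_\ell x_{\ell+1}$ for every $x_{\ell+1}\in\mathbb Z_{d+1}$ with $x_{\ell+1}\neq x_1,x_\ell$. The diameter is the maximum directed distance between ordered pairs of vertices. *)

From mathcomp Require Import all_boot.
Unset Strict Implicit. Unset Printing Implicit Defensive.

(* Symbols: Z_{d+1} represented by 'I_(d.+1) (only the set of d+1 labels matters). *)

Definition sK_vertex (d l : nat) (x : seq 'I_d.+1) : bool :=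
  (size x == l) && sorted (fun a b : 'I_d.+1 => a != b) x.

Definition sK_arc (d l : nat) (x y : seq 'I_d.+1) : bool :=
  [&& sK_vertex d l x, sK_vertex d l y &
   [exists z : 'I_d.+1,
      [&& z != nth z x 0, z != nth z x (l.-1) & y == rcons (behead x) z]]].

Definition sK_walk (d l k : nat) (x y : seq 'I_d.+1) : Prop :=
  exists p : seq (seq 'I_d.+1),
    [/\ size p = k, path (sK_arc d l) x p & last x p = y].

Definition sK_diameter_is (d l D : nat) : Prop :=
  (forall x y, sK_vertex d l x -> sK_vertex d l y ->
     exists k, k <= D /\ sK_walk d l k x y) /\
  (exists x y, [/\ sK_vertex d l x, sK_vertex d l y &
     forall k, sK_walk d l k x y -> D <= k]).

From mathcomp Require Import all_boot zify.
Set Implicit Arguments.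
Unset Strict Implicit.
Unset Printing Implicit Defensive.

(* A walk of length k in sK(d,l) is the same as a word w_0 .. w_(k+l-1) whose
   length-l windows are the visited vertices: consecutive letters differ, and
   w_(j+l) <> w_j for j < k (the new letter differs from the dropped one).

   Upper bound: between vertices x and y, choose k = 2l-1, or k = 2l-2 when
   x_(l-1) = y_0; the k-l letters between x and y each have to avoid at most four
   letters, which is possible with d+1 >= 5 symbols.  Lower bound: for
   x = 0101... and a suitable y (letters 0, 1, 2), the required coincidences
   between x and y contradict the constraints for every k < 2l-1. *)

Definition fresh {T : finType} (x0 : T) (s : seq T) : T :=
  odflt x0 [pick z | z \notin s].

Lemma fresh_notin (T : finType) (x0 : T) (s : seq T) :
  size s < #|T| -> fresh x0 s \notin s.
Proof.
rewrite /fresh; case: pickP => [z //|all_in].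
have s_full : s =i predT by move=> z; have := all_in z; case: (z \in s).
by rewrite cardT -(eq_cardT s_full) ltnNge card_size.
Qed.

Section Windows.

Variables d l : nat.
Implicit Type w : nat -> 'I_d.+1.

Definition window w i : seq 'I_d.+1 := mkseq (fun t => w (i + t)) l.

Lemma size_window w i : size (window w i) = l.
Proof. exact: size_mkseq. Qed.

Lemma nth_window w i t x0 : t < l -> nth x0 (window w i) t = w (i + t).
Proof. exact: nth_mkseq. Qed.

Lemma sK_vertex_window w i :
  (forall t, i <= t -> t.+1 < i + l -> w t != w t.+1) ->
  sK_vertex d l (window w i).
Proof.
move=> adj; rewrite /sK_vertex size_window eqxx /=.
apply/(sortedP (w 0)) => t; rewrite size_window => lt_tl.
by rewrite !nth_window ?addnS; [apply: adj|..]; lia.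
Qed.

Lemma sK_arc_window w i : 0 < l ->
  (forall t, i <= t -> t.+1 < i + l.+1 -> w t != w t.+1) -> w (i + l) != w i ->
  sK_arc d l (window w i) (window w i.+1).
Proof.
move=> l_gt0 adj new_letter.
have vertex j : i <= j <= i.+1 -> sK_vertex d l (window w j).
  by case/andP=> *; apply: sK_vertex_window => t *; apply: adj; lia.
rewrite /sK_arc !vertex ?leqnn ?leqnSn //=.
apply/existsP; exists (w (i + l)); rewrite !nth_window ?addn0 ?new_letter //=; last lia.
apply/andP; split.
  have -> : i + l = (i + l.-1).+1 by lia.
  by rewrite eq_sym adj //; lia.
apply/eqP/(eq_from_nth (x0 := w 0)) => [|t].
  by rewrite size_rcons size_behead !size_window; lia.
rewrite size_window => lt_tl; rewrite nth_rcons size_behead size_window.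
case: ltnP => [lt_t|ge_t].
  by rewrite nth_behead !nth_window ?addSnnS //; lia.
have -> : t = l.-1 by lia.
by rewrite eqxx nth_window; [congr w|]; lia.
Qed.

Lemma sK_walk_window w k : 0 < l ->
  (forall t, t.+1 < l + k -> w t != w t.+1) ->
  (forall j, j < k -> w (l + j) != w j) ->
  sK_walk d l k (window w 0) (window w k).
Proof.
move=> l_gt0 adj new_letter.
exists (mkseq (fun i => window w i.+1) k); split.
- exact: size_mkseq.
- apply/(pathP (window w 0)) => i; rewrite size_mkseq => lt_ik.
  rewrite nth_mkseq //.
  have -> : nth (window w 0) (window w 0 :: mkseq (fun i => window w i.+1) k) i
            = window w i by case: i lt_ik => [|i] lt_ik //=; rewrite nth_mkseq //; lia.
  apply: sK_arc_window => //; first by move=> t *; apply: adj; lia.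
  by rewrite addnC; apply: new_letter.
- rewrite (last_nth (window w 0)) size_mkseq.
  by case: k {adj new_letter} => [|k] //=; rewrite nth_mkseq.
Qed.

Lemma sK_arc_shift x y : 0 < l -> sK_arc d l x y ->
  (forall t, t.+1 < l -> nth ord0 y t = nth ord0 x t.+1) /\
  nth ord0 y l.-1 != nth ord0 x 0.
Proof.
move=> l_gt0 /and3P [/andP [/eqP size_x _] _ /existsP [z /and3P [z_x0 _ /eqP ->]]].
split=> [t lt_tl|]; rewrite nth_rcons size_behead size_x.
  by rewrite ifT ?nth_behead //; lia.
by rewrite ltnn eqxx (set_nth_default z) ?size_x.
Qed.

Lemma sK_walk_word k x y : 0 < l -> sK_walk d l k x y ->
  exists w : nat -> 'I_d.+1,
    [/\ forall t, t < l -> nth ord0 x t = w t,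
        forall t, t < l -> nth ord0 y t = w (k + t)
      & forall j, j < k -> w (l + j) != w j].
Proof.
move=> l_gt0 [p [size_p walk_p last_p]].
pose w n := if n < l then nth ord0 x n else nth ord0 (nth x p (n - l)) l.-1.
have arc i : i < k -> sK_arc d l (nth x (x :: p) i) (nth x p i).
  by move=> lt_ik; apply: (pathP x walk_p); rewrite size_p.
have visited i : i <= k -> forall t, t < l -> nth ord0 (nth x (x :: p) i) t = w (i + t).
  elim: i => [|i IHi] le_ik t lt_tl; first by rewrite /= /w lt_tl.
  have [shift _] := sK_arc_shift l_gt0 (arc i le_ik).
  case: (ltnP t.+1 l) => [lt_t1l|ge_t1l]; first by rewrite /= shift // IHi ?addSnnS //; lia.
  have -> : t = l.-1 by lia.
  rewrite /w ifF; last lia.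
  by have -> : i.+1 + l.-1 - l = i by lia.
exists w; split=> [t lt_tl|t lt_tl|j lt_jk]; first by rewrite /w lt_tl.
  by rewrite -visited // -last_p (last_nth x) size_p.
have [_ new_letter] := sK_arc_shift l_gt0 (arc j lt_jk).
have := visited j (ltnW lt_jk) 0 l_gt0; rewrite addn0 => <-.
rewrite /w ifF; last lia.
by have -> : l + j - l = j by lia.
Qed.

End Windows.

Lemma inord_eq d n m : n <= d -> m <= d -> ((inord n : 'I_d.+1) == inord m) = (n == m).
Proof. by move=> le_nd le_md; rewrite -val_eqE /= !inordK. Qed.

Section FarPair.

Variables d l : nat.
Hypotheses (d_ge2 : 2 <= d) (l_ge3 : 3 <= l).

Definition far_source : seq 'I_d.+1 := mkseq (fun t => inord (t %% 2)) l.

Definition far_target_letter t :=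
  if t == 0 then (l - 2) %% 2 else if t %% 2 == 1 then 2 else (l - 1) %% 2.

Definition far_target : seq 'I_d.+1 :=
  mkseq (fun t => inord (far_target_letter t)) l.

Lemma far_target_letter_le t : far_target_letter t <= d.
Proof. by rewrite /far_target_letter; case: ifP => _; [|case: ifP]; lia. Qed.

Lemma sK_vertex_far_source : sK_vertex d l far_source.
Proof.
rewrite /sK_vertex size_mkseq eqxx; apply/(sortedP ord0) => t.
by rewrite size_mkseq => lt_tl; rewrite !nth_mkseq ?inord_eq; lia.
Qed.

Lemma sK_vertex_far_target : sK_vertex d l far_target.
Proof.
rewrite /sK_vertex size_mkseq eqxx; apply/(sortedP ord0) => t.
rewrite size_mkseq => lt_tl; rewrite !nth_mkseq ?inord_eq ?far_target_letter_le; try lia.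
by rewrite /far_target_letter /=; repeat case: ifP => ?; lia.
Qed.

(* A short walk would force a letter of x to equal one of y (overlapping
   windows, k < l), or a forbidden repetition w_(l+j) = w_j with j = k-l or
   j = k-l+2, whichever has the parity that makes x_j equal to y_0 or y_2. *)
Lemma far_pair_dist k :
  sK_walk d l k far_source far_target -> 2 * l - 1 <= k.
Proof.
case/(sK_walk_word (ltnW (ltnW l_ge3))) => w [on_x on_y new_letter].
have x_val t : t < l -> val (w t) = t %% 2.
  by move=> lt_tl; rewrite -on_x // nth_mkseq //= inordK //; lia.
have y_val t : t < l -> val (w (k + t)) = far_target_letter t.
  by move=> lt_tl; rewrite -on_y // nth_mkseq //= inordK //; apply: far_target_letter_le.
have new_val j : j < k -> val (w (l + j)) != val (w j) by move=> lt_jk; rewrite val_eqE new_letter.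
rewrite leqNgt; apply/negP => short.
case: (ltnP k l.-1) => [lt_kl1|ge_kl1].
  by have := x_val k.+1 ltac:(lia); have := y_val 1 ltac:(lia);
     rewrite addn1 /far_target_letter /=; lia.
case: (ltnP k l) => [lt_kl|ge_kl].
  have k_eq : k = l.-1 by lia.
  by have := x_val k ltac:(lia); have := y_val 0 ltac:(lia);
     rewrite addn0 /far_target_letter /=; lia.
have k_split : l + (k - l) = k by lia.
case: (boolP ((k - l) %% 2 == (l - 2) %% 2)) => parity.
  have := new_val (k - l) ltac:(lia); have := x_val (k - l) ltac:(lia).
  by have := y_val 0 ltac:(lia); rewrite addn0 k_split /far_target_letter /=; lia.
have := new_val (k - l).+2 ltac:(lia); have := x_val (k - l).+2 ltac:(lia).
have -> : l + (k - l).+2 = k + 2 by lia.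
by have := y_val 2 ltac:(lia); rewrite /far_target_letter /=; lia.
Qed.

End FarPair.

Section Bridge.

Variables (d l k : nat) (x y : seq 'I_d.+1).
Hypotheses (d_ge4 : 4 <= d) (l_gt0 : 0 < l) (lt_lk : l < k) (le_k2l : k <= 2 * l).
Hypotheses (x_vertex : sK_vertex d l x) (y_vertex : sK_vertex d l y).
Hypothesis x_y_compatible :
  forall j, j < l -> k <= j + l -> nth ord0 x j != nth ord0 y (j + l - k).

(* Each letter strictly between x and y avoids the letter it replaces, its
   predecessor, the letter of y that will replace it, and the first letter of y. *)
Fixpoint bridge t : 'I_d.+1 :=
  match t with
  | 0 => nth ord0 x 0
  | t'.+1 =>
    if t < l then nth ord0 x t
    else if t < k then
      fresh ord0 [:: nth ord0 x (t - l); bridge t'; nth ord0 y (t + l - k); nth ord0 y 0]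
    else nth ord0 y (t - k)
  end.

Lemma bridge_source t : t < l -> bridge t = nth ord0 x t.
Proof. by case: t => [|t] //= ->. Qed.

Lemma bridge_target t : k <= t -> bridge t = nth ord0 y (t - k).
Proof.
case: t => [|t] /= le_kt; first lia.
by rewrite ltnNge (leq_trans (ltnW lt_lk) le_kt) ltnNge le_kt.
Qed.

Lemma bridge_middle t : l <= t < k ->
  [/\ bridge t != nth ord0 x (t - l), bridge t != bridge t.-1,
      bridge t != nth ord0 y (t + l - k) & bridge t != nth ord0 y 0].
Proof.
case: t => [|t] /andP [le_lt lt_tk]; first lia.
rewrite /= ltnNge le_lt lt_tk /=.
have := @fresh_notin _ ord0
  [:: nth ord0 x (t.+1 - l); bridge t; nth ord0 y (t.+1 + l - k); nth ord0 y 0].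
by rewrite card_ord !inE !negb_or => /(_ d_ge4) /and4P.
Qed.

Lemma sK_walk_bridge : sK_walk d l k x y.
Proof.
move: x_vertex y_vertex => /andP [/eqP size_x /(sortedP ord0) x_adj].
move=> /andP [/eqP size_y /(sortedP ord0) y_adj].
have <- : window l bridge 0 = x.
  apply: (eq_from_nth (x0 := ord0)); rewrite size_window ?size_x // => t lt_tl.
  by rewrite nth_window // bridge_source.
have <- : window l bridge k = y.
  apply: (eq_from_nth (x0 := ord0)); rewrite size_window ?size_y // => t lt_tl.
  by rewrite nth_window // bridge_target ?leq_addr // addKn.
apply: sK_walk_window => // [t lt_t1lk|j lt_jk].
- case: (ltnP t.+1 l) => [lt_t1l|le_lt1].
    by rewrite !bridge_source ?x_adj ?size_x //; lia.
  case: (ltnP t.+1 k) => [lt_t1k|le_kt1].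
    by have [_ + _ _] := bridge_middle (t := t.+1) ltac:(lia); rewrite eq_sym.
  case: (ltnP t k) => [lt_tk|le_kt].
    have [_ _ _ +] := bridge_middle (t := t) ltac:(lia).
    by rewrite (bridge_target le_kt1) (_ : t.+1 - k = 0) //; lia.
  rewrite !bridge_target ?(leq_trans le_kt) //.
  have -> : t.+1 - k = (t - k).+1 by lia.
  by rewrite y_adj ?size_y //; lia.
- case: (ltnP (l + j) k) => [lt_ljk|le_klj].
    have [+ _ _ _] := bridge_middle (t := l + j) ltac:(lia).
    by rewrite [bridge j]bridge_source ?addKn //; lia.
  rewrite bridge_target // eq_sym.
  have -> : l + j - k = j + l - k by lia.
  case: (ltnP j l) => [lt_jl|le_lj]; first by rewrite bridge_source // x_y_compatible //; lia.
  by have [_ _ + _] := bridge_middle (t := j) ltac:(lia).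
Qed.

End Bridge.

Lemma sK_dist_le d l x y : 4 <= d -> 3 <= l ->
  sK_vertex d l x -> sK_vertex d l y ->
  exists k, k <= 2 * l - 1 /\ sK_walk d l k x y.
Proof.
move=> d_ge4 l_ge3 x_vertex y_vertex.
have /andP [/eqP size_x /(sortedP ord0) x_adj] := x_vertex.
have /andP [/eqP size_y /(sortedP ord0) y_adj] := y_vertex.
case: (eqVneq (nth ord0 x l.-1) (nth ord0 y 0)) => [x_last_y0|x_last_y0].
- exists (2 * l - 2); split; first lia.
  apply: sK_walk_bridge => //; try lia.
  move=> j lt_jl le_kjl; have [->|->] : j = l - 2 \/ j = l.-1 by lia.
  + have -> : l - 2 + l - (2 * l - 2) = 0 by lia.
    rewrite -x_last_y0; have -> : l.-1 = (l - 2).+1 by lia.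
    by rewrite x_adj // size_x; lia.
  + have -> : l.-1 + l - (2 * l - 2) = 1 by lia.
    by rewrite x_last_y0 y_adj // size_y; lia.
- exists (2 * l - 1); split; first lia.
  apply: sK_walk_bridge => //; try lia.
  move=> j lt_jl le_kjl; have -> : j = l.-1 by lia.
  by have -> : l.-1 + l - (2 * l - 1) = 0 by lia.
Qed.

Theorem corollary0 (d l : nat) (hd : 4 <= d) (hl : 3 <= l) :
  sK_diameter_is d l (2 * l - 1).
Proof.
split=> [x y|]; first exact: sK_dist_le.
have d_ge2 : 2 <= d by lia.
exists (far_source d l), (far_target d l); split.
- exact: sK_vertex_far_source.
- exact: sK_vertex_far_target.
- exact: far_pair_dist.
Qed.
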